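(* For every integer $k\ge 4$, the order $TW_k$ has questionable-width at least $3k-8$.
   Context: For an integer $k\ge3$, $TW_k$ is the order on the elements $t_0,\dots,t_{k-1}$ together with one element $w_{a,b}$ for each pair of integers $0\le a$, $b\le k-1$ with $b\ge a+2$, whose order relation is: $t_j<t_l$ iff $j<l$; $t_j<w_{a,b}$ iff $j\le a$; $w_{a,b}<t_j$ iff $j\ge b$; $w_{a,b}<w_{c,d}$ iff $b\le c$; all other pairs are incomparable. For an ordinal $j$, $\mathcal O_j=(O_k)_{k<j}$ is a sequence of orders; a word of length $\ell\le j$ is $(x_k)_{k<\ell}$ with $x_k\in\mathrm{Dom}(O_k)$. The question of words $X,Y$ is $(k,x_k,y_k)$ for the least $k<\min(\mathrm{len}X,\mathrm{len}Y)$ with $x_k\ne y_k$, if it exists. For $i<j$, $\mathrm{Next}(i,j,\mathcal O_j)$ is the partial order on words of length $\ell$, $i\le\ell<j$, with $X<Y$ iff their question exists and $x_k<y_k$ in $O_k$; otherwise incomparable. A questionable representation of an order $O$ is an injective $f$ into some $\mathrm{Next}(i,j,\mathcal O_j)$ with $f(x)<f(y)\iff x<y$; its width is the supremum of the cardinalities of the $\mathrm{Dom}(O_k)$. The questionable-width of $O$ is the minimum width of a questionable representation of $O$. *)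

From mathcomp Require Import all_boot.
Set Implicit Arguments. Unset Strict Implicit. Unset Printing Implicit Defensive.

(* Elements: t_j (j < k) and w_{a,b} (a, b < k, a + 2 <= b). *)
Definition TWel (k : nat) : Type :=
  ('I_k + {p : 'I_k * 'I_k | (p.1 : nat).+2 <= p.2})%type.

Definition tw_t {k} (j : 'I_k) : TWel k := inl j.

Definition tw_lt (k : nat) (x y : TWel k) : bool :=
  match x, y with
  | inl j, inl l => (j : nat) < l
  | inl j, inr w => (j : nat) <= (sval w).1
  | inr w, inl j => (sval w).2 <= (j : nat)
  | inr w, inr w' => (sval w).2 <= (sval w').1
  end.

(* An ordinal j is represented by a type J with a strict well-order ltJ:
   the elements of J are the ordinals < j.  A word of length l (l an element
   of J, i.e. an ordinal < j) is given by l together with a total letter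
   function x : forall q, D q, of which only the letters x q with q < l matter. *)

Definition strict_wellorder (J : Type) (lt : J -> J -> Prop) : Prop :=
  (forall x, ~ lt x x) /\
  (forall x y z, lt x y -> lt y z -> lt x z) /\
  (forall x y, x = y \/ lt x y \/ lt y x) /\
  well_founded lt.

Definition strict_porder (T : Type) (R : T -> T -> Prop) : Prop :=
  (forall x, ~ R x x) /\ (forall x y z, R x y -> R y z -> R x z).

Definition word_eq (J : Type) (lt : J -> J -> Prop) (D : J -> Type)
  (l1 : J) (x : forall q, D q) (l2 : J) (y : forall q, D q) : Prop :=
  l1 = l2 /\ (forall q, lt q l1 -> x q = y q).

Definition next_lt (J : Type) (lt : J -> J -> Prop) (D : J -> Type)
  (O : forall q, D q -> D q -> Prop)
  (l1 : J) (x : forall q, D q) (l2 : J) (y : forall q, D q) : Prop :=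
  exists q, [/\ lt q l1, lt q l2, x q <> y q,
              (forall p, lt p q -> x p = y p) & O q (x q) (y q)].

Definition questionable_rep (X : Type) (R : X -> X -> Prop)
  (J : Type) (lt : J -> J -> Prop) (D : J -> Type)
  (O : forall q, D q -> D q -> Prop) (i : J)
  (len : X -> J) (wrd : X -> forall q, D q) : Prop :=
  [/\ (forall a, ~ lt (len a) i),
      (forall a b, word_eq lt (len a) (wrd a) (len b) (wrd b) -> a = b) &
      (forall a b, R a b <-> next_lt lt O (len a) (wrd a) (len b) (wrd b))].

(* width >= n : sup_q |D q| >= n, i.e. some D q has at least n elements *)
Definition width_ge (J : Type) (D : J -> Type) (n : nat) : Prop :=
  exists q : J, exists f : 'I_n -> D q, injective f.

From mathcomp Require Import all_boot.
From mathcomp Require Import zify.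
From Stdlib Require Import Classical.

(* Write k = n+4 and consider the 3k-8 elements
     t_j (1 <= j <= k-2),  w_{0,b} (2 <= b <= k-2),  w_{a,k-1} (1 <= a <= k-3)
   of TW_k; call this suborder the core.  Given a questionable representation,
   let q0 be the first position at which the words of the core do not all
   carry one common letter.  Every core word is longer than q0 and all of them
   agree before q0, so two core elements with different letters at q0 are
   compared by the question at q0.  Hence each class "letter at q0 = c" is a
   module of the core: no core element outside it relates differently to two
   of its members.  The core is prime (a module with two elements is the whole
   core), and its letters at q0 are not all equal, so distinct core elements
   receive distinct letters at q0: the alphabet D q0 has at least 3k-8 letters. *)

Set Implicit Arguments.
Unset Strict Implicit.
Unset Printing Implicit Defensive.

Definition distinguishes (X : Type) (R : rel X) (z x x' : X) : bool :=
  (R z x != R z x') || (R x z != R x' z).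

Definition module (X : Type) (V : X -> Prop) (R : rel X) (M : X -> Prop) : Prop :=
  forall x x' z, V x -> V x' -> V z -> M x -> M x' ->
  distinguishes R z x x' -> M z.

Definition prime_order (X : Type) (V : X -> Prop) (R : rel X) : Prop :=
  forall M, module V R M ->
  forall x x', V x -> V x' -> x <> x' -> M x -> M x' -> forall z, V z -> M z.

Lemma prime_order_injective (X Y : Type) (V : X -> Prop) (R : rel X)
    (f : X -> Y) :
  prime_order V R -> (forall c, module V R (fun z => f z = c)) ->
  (exists x y, [/\ V x, V y & f x <> f y]) ->
  forall x x', V x -> V x' -> f x = f x' -> x = x'.
Proof.
move=> prime_VR fibre_module [y [y' [Vy Vy' f_yy']]] x x' Vx Vx' f_xx'.
apply: NNPP => neq_xx'.
have fibre_all := prime_VR _ (fibre_module (f x)) x x' Vx Vx' neq_xx'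
  erefl (esym f_xx').
by apply: f_yy'; rewrite (fibre_all y Vy) (fibre_all y' Vy').
Qed.

Lemma wf_minimal (J : Type) (lt : J -> J -> Prop) (P : J -> Prop) :
  well_founded lt -> (exists q, P q) ->
  exists q, P q /\ forall p, lt p q -> ~ P p.
Proof.
move=> wf [q]; elim/(well_founded_ind wf): q => q IH Pq.
case: (classic (exists2 p, lt p q & P p)) => [[p lt_pq Pp] | none].
  exact: IH Pp.
by exists q; split=> // p lt_pq Pp; apply: none; exists p.
Qed.

Section FirstSplit.

Variables (X J : Type) (R : rel X) (V : X -> Prop).
Variables (ltJ : J -> J -> Prop) (D : J -> Type) (O : forall q, D q -> D q -> Prop).
Variables (len : X -> J) (wrd : X -> forall q, D q).
Hypothesis hJ : strict_wellorder ltJ.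
Hypothesis represents : forall x y, V x -> V y ->
  R x y <-> next_lt ltJ O (len x) (wrd x) (len y) (wrd y).
Hypothesis has_partner : forall x, V x -> exists2 y, V y & R x y \/ R y x.
Hypothesis V_inhabited : exists x, V x.

Definition common_letter (q : J) : Prop :=
  forall x y, V x -> V y -> ltJ q (len x) /\ wrd x q = wrd y q.

(* Two comparable elements of V differ at their question, so some position
   has no common letter; take the first one. *)
Lemma first_split_exists :
  exists q0, ~ common_letter q0 /\ forall p, ltJ p q0 -> common_letter p.
Proof.
have [_ [_ [_ wf]]] := hJ.
have [x Vx] := V_inhabited; have [y Vy comparable_xy] := has_partner Vx.
have [q no_common] : exists q, ~ common_letter q.
  case: comparable_xy => [/(represents Vx Vy) | /(represents Vy Vx)]
    [q [_ _ diff _ _]]; exists q => common; apply: diff.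
  - by have [_ ->] := common _ _ Vx Vy.
  - by have [_ ->] := common _ _ Vy Vx.
have [q0 [no_common0 minimal]] :=
  wf_minimal wf (ex_intro (fun q => ~ common_letter q) q no_common).
by exists q0; split=> // p /minimal/NNPP.
Qed.

Section AtFirstSplit.

Variable q0 : J.
Hypothesis split_q0 : ~ common_letter q0.
Hypothesis agree_below : forall p, ltJ p q0 -> common_letter p.

(* A word of length q0 (or less) could not differ from its partner. *)
Lemma long_words x : V x -> ltJ q0 (len x).
Proof.
move=> Vx; have [irr [_ [total _]]] := hJ.
case: (total q0 (len x)) => [eq_len | [// | short]]; last first.
  by have [lt_xx _] := agree_below short Vx Vx; case: (irr _ lt_xx).
have [y Vy comparable_xy] := has_partner Vx.
case: comparable_xy => [/(represents Vx Vy) | /(represents Vy Vx)]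
  [q [lt_qx lt_qy diff _ _]]; case: diff.
- by rewrite -eq_len in lt_qx; have [_ ->] := agree_below lt_qx Vx Vy.
- by rewrite -eq_len in lt_qy; have [_ ->] := agree_below lt_qy Vy Vx.
Qed.

Lemma letters_split : exists x y, [/\ V x, V y & wrd x q0 <> wrd y q0].
Proof.
apply: NNPP => none; apply: split_q0 => x y Vx Vy.
split; first exact: long_words.
by apply: NNPP => diff; apply: none; exists x, y.
Qed.

Lemma decided_at_split x y : V x -> V y -> wrd x q0 <> wrd y q0 ->
  R x y <-> O (wrd x q0) (wrd y q0).
Proof.
move=> Vx Vy diff0; have [_ [_ [total _]]] := hJ.
apply: (iff_trans (represents Vx Vy)); split.
- move=> [q [_ _ diff agree O_xy]].
  case: (total q q0) => [<- // | [lt_qq0 | lt_q0q]].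
  + by case: diff; have [_ ->] := agree_below lt_qq0 Vx Vy.
  + by case: diff0; apply: agree.
- move=> O_xy; exists q0; split=> //; try exact: long_words.
  by move=> p lt_pq0; have [_ ->] := agree_below lt_pq0 Vx Vy.
Qed.

Lemma letter_class_module (c : D q0) : module V R (fun z => wrd z q0 = c).
Proof.
move=> x x' z Vx Vx' Vz cx cx' dist; apply: NNPP => zc.
have below y : V y -> wrd y q0 = c -> R z y <-> O (wrd z q0) c.
  by move=> Vy cy; rewrite -cy; apply: decided_at_split; rewrite // cy.
have above y : V y -> wrd y q0 = c -> R y z <-> O c (wrd z q0).
  move=> Vy cy; rewrite -cy; apply: decided_at_split => // yz.
  by apply: zc; rewrite -yz.
have eq_below : R z x = R z x'.
  by apply/idP/idP => [/(below _ Vx cx)/(below _ Vx' cx')|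
                        /(below _ Vx' cx')/(below _ Vx cx)].
have eq_above : R x z = R x' z.
  by apply/idP/idP => [/(above _ Vx cx)/(above _ Vx' cx')|
                        /(above _ Vx' cx')/(above _ Vx cx)].
by move: dist; rewrite /distinguishes eq_below eq_above !eqxx.
Qed.

End AtFirstSplit.

Lemma first_split_modules : exists q,
  (forall c : D q, module V R (fun z => wrd z q = c)) /\
  exists x y, [/\ V x, V y & wrd x q <> wrd y q].
Proof.
have [q0 [split_q0 agree_below]] := first_split_exists.
exists q0; split; first exact: letter_class_module.
exact: letters_split.
Qed.

End FirstSplit.

(* Indices of the core of TW_(n+4):  ST j = t_j,  SL b = w_{0,b},
   SU a = w_{a,n+3}. *)
Inductive core_idx := ST of nat | SL of nat | SU of nat.

Definition in_core (n : nat) (s : core_idx) : bool :=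
  match s with
  | ST j => (1 <= j) && (j <= n.+2)
  | SL b => (2 <= b) && (b <= n.+2)
  | SU a => (1 <= a) && (a <= n.+1)
  end.

Definition core_lt (s s' : core_idx) : bool :=
  match s, s' with
  | ST i, ST j => i < j
  | ST j, SU a => j <= a
  | SL b, ST j => b <= j
  | SL b, SU a => b <= a
  | _, _ => false
  end.

(* A fixed w-element, the fallback of the smart constructor below. *)
Definition w_default (n : nat) : {p : 'I_n.+4 * 'I_n.+4 | (p.1 : nat).+2 <= p.2}.
Proof. by exists (ord0, inord 2); rewrite /= inordK. Defined.

Definition tw_w (n a b : nat) : TWel n.+4 := inr (insubd (w_default n) (inord a, inord b)).

Lemma tw_wK n a b : a.+2 <= b -> b < n.+4 ->
  sval (insubd (w_default n) (inord a, inord b)) = (inord a, inord b).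
Proof. by move=> le_ab lt_bn; apply: insubdK; rewrite unfold_in /= !inordK; lia. Qed.

Definition core_emb (n : nat) (s : core_idx) : TWel n.+4 :=
  match s with
  | ST j => inl (inord j)
  | SL b => tw_w n 0 b
  | SU a => tw_w n a n.+3
  end.

Lemma tw_lt_core_emb n s s' : in_core n s -> in_core n s' ->
  tw_lt (core_emb n s) (core_emb n s') = core_lt s s'.
Proof.
by case: s => [j|b|a]; case: s' => [j'|b'|a'] /= Vs Vs';
  rewrite /tw_lt /tw_w ?tw_wK /= ?inordK //; lia.
Qed.

Lemma core_partner n s : in_core n s ->
  exists2 s', in_core n s' & core_lt s s' \/ core_lt s' s.
Proof.
case: s => [j|b|a] /= Vs.
- case: (eqVneq j 1) => [->|ne_j1]; first by exists (ST 2) => /=; [lia | left].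
  by exists (ST 1) => /=; [lia | right; lia].
- by exists (ST n.+2) => /=; [lia | left; lia].
- by exists (ST 1) => /=; [lia | right; lia].
Qed.

Section CorePrime.

Variables (n : nat) (M : core_idx -> Prop).
Hypothesis M_module : module (in_core n) core_lt M.

Lemma mem_below z x x' : in_core n z -> in_core n x -> in_core n x' ->
  M x -> M x' -> core_lt z x -> ~~ core_lt z x' -> M z.
Proof.
move=> Vz Vx Vx' Mx Mx' zx zx'; apply: (M_module Vx Vx') => //.
by rewrite /distinguishes zx (negbTE zx').
Qed.

Lemma mem_above z x x' : in_core n z -> in_core n x -> in_core n x' ->
  M x -> M x' -> core_lt x z -> ~~ core_lt x' z -> M z.
Proof.
move=> Vz Vx Vx' Mx Mx' xz x'z; apply: (M_module Vx Vx') => //.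
by rewrite /distinguishes xz (negbTE x'z) orbT.
Qed.

(* Two t's in M bring in w_{0,j} and w_{i,n+3}, and then every t. *)
Lemma all_T_of_two_T i j : 1 <= i -> i < j -> j <= n.+2 ->
  M (ST i) -> M (ST j) -> forall l, 1 <= l <= n.+2 -> M (ST l).
Proof.
move=> ge1_i lt_ij le_jn Mi Mj.
have ML : M (SL j) by apply: (@mem_below (SL j) (ST j) (ST i)) => //=; lia.
have MU : M (SU i) by apply: (@mem_above (SU i) (ST i) (ST j)) => //=; lia.
move=> l Vl; case: (ltnP l j) => [lt_lj | le_jl].
- by apply: (@mem_below (ST l) (ST j) (SL j)) => //=; lia.
- by apply: (@mem_above (ST l) (ST i) (SU i)) => //=; lia.
Qed.

(* w_{0,b} is separated by t_(b-1), t_b, and w_{a,n+3} by t_a, t_(a+1). *)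
Lemma all_of_all_T : (forall l, 1 <= l <= n.+2 -> M (ST l)) ->
  forall s, in_core n s -> M s.
Proof.
move=> MT [l|b|a] /= Vs; first exact: MT.
- by apply: (@mem_below (SL b) (ST b) (ST b.-1)) => //=; try apply: MT; lia.
- by apply: (@mem_above (SU a) (ST a) (ST a.+1)) => //=; try apply: MT; lia.
Qed.

Lemma some_T x x' : in_core n x -> in_core n x' -> x <> x' -> M x -> M x' ->
  exists2 j, 1 <= j <= n.+2 & M (ST j).
Proof.
case: x => [j|b|a]; case: x' => [j'|b'|a'] /= Vx Vx' neq Mx Mx';
  try by [exists j => //; lia | exists j' => //; lia].
- case: (ltngtP b b') => [lt_bb' | lt_b'b | eq_bb']; last by case: neq; rewrite eq_bb'.
  + by exists b; [lia | apply: (@mem_above (ST b) (SL b) (SL b')) => //=; lia].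
  + by exists b'; [lia | apply: (@mem_above (ST b') (SL b') (SL b)) => //=; lia].
- by exists b; [lia | apply: (@mem_above (ST b) (SL b) (SU a')) => //=; lia].
- by exists b'; [lia | apply: (@mem_above (ST b') (SL b') (SU a)) => //=; lia].
- case: (ltngtP a a') => [lt_aa' | lt_a'a | eq_aa']; last by case: neq; rewrite eq_aa'.
  + by exists a'; [lia | apply: (@mem_below (ST a') (SU a') (SU a)) => //=; lia].
  + by exists a; [lia | apply: (@mem_below (ST a) (SU a) (SU a')) => //=; lia].
Qed.

Lemma second_T j y : 1 <= j <= n.+2 -> in_core n y -> y <> ST j ->
  M (ST j) -> M y -> exists2 i, (1 <= i <= n.+2) && (i != j) & M (ST i).
Proof.
case: y => [i|b|a] /= Vj Vy neq Mj My.
- have ne_ij : i != j by apply/eqP => eq_ij; case: neq; rewrite eq_ij.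
  by exists i => //; rewrite Vy.
- case: (ltngtP j b.-1) => [lt_jb | gt_jb | eq_jb].
  + by exists b.-1; [lia | apply: (@mem_above (ST b.-1) (ST j) (SL b)) => //=; lia].
  + by exists b.-1; [lia | apply: (@mem_below (ST b.-1) (ST j) (SL b)) => //=; lia].
  + have MU : M (SU j) by apply: (@mem_above (SU j) (ST j) (SL b)) => //=; lia.
    by exists j.+1; [lia | apply: (@mem_above (ST j.+1) (ST j) (SU j)) => //=; lia].
- case: (ltngtP j a.+1) => [lt_ja | gt_ja | eq_ja].
  + by exists a.+1; [lia | apply: (@mem_above (ST a.+1) (ST j) (SU a)) => //=; lia].
  + by exists a.+1; [lia | apply: (@mem_below (ST a.+1) (ST j) (SU a)) => //=; lia].
  + have ML : M (SL j) by apply: (@mem_below (SL j) (ST j) (SU a)) => //=; lia.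
    by exists a; [lia | apply: (@mem_below (ST a) (ST j) (SL j)) => //=; lia].
Qed.

End CorePrime.

Lemma core_prime n : prime_order (in_core n) core_lt.
Proof.
move=> M M_module x x' Vx Vx' neq Mx Mx'.
have [j Vj Mj] := some_T M_module Vx Vx' neq Mx Mx'.
have [y [Vy ne_yj My]] : exists y, [/\ in_core n y, y <> ST j & M y].
  case: (classic (x = ST j)) => [eq_xj | ne_xj]; last by exists x.
  by exists x'; split=> // eq_x'j; apply: neq; rewrite eq_xj eq_x'j.
have [i /andP [Vi ne_ij] Mi] := second_T M_module Vj Vy ne_yj Mj My.
apply: (all_of_all_T M_module).
case: (ltngtP i j) => [lt_ij | lt_ji | eq_ij]; last by rewrite eq_ij eqxx in ne_ij.
- by apply: (all_T_of_two_T M_module) Mi Mj; lia.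
- by apply: (all_T_of_two_T M_module) Mj Mi; lia.
Qed.

Definition core_enum (n i : nat) : core_idx :=
  if i < n.+2 then ST i.+1
  else if i < 2 * n + 3 then SL (i - n)
  else SU (i - (2 * n + 2)).

Lemma core_enum_in_core n i : i < 3 * n + 4 -> in_core n (core_enum n i).
Proof. by rewrite /core_enum => lt_i; case: ifP => /= ?; [|case: ifP => /= ?]; lia. Qed.

Lemma core_enum_inj n i i' : core_enum n i = core_enum n i' -> i = i'.
Proof.
rewrite /core_enum.
by case: ifP => ?; case: ifP => ?; try case: ifP => ?; try case: ifP => ?;
  move=> eq_ii'; try discriminate eq_ii'; case: eq_ii'; lia.
Qed.

Unset Implicit Arguments.

Theorem lemma7p3 (k : nat) (hk : 4 <= k)
  (J : Type) (ltJ : J -> J -> Prop) (hJ : strict_wellorder ltJ)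
  (D : J -> Type) (O : forall q, D q -> D q -> Prop)
  (hO : forall q, strict_porder (O q))
  (i : J) (len : TWel k -> J) (wrd : TWel k -> forall q, D q)
  (hrep : questionable_rep (fun x y => tw_lt x y) ltJ O i len wrd) :
  width_ge D (3 * k - 8).
Proof.
destruct k as [|[|[|[|n]]]]; try by [].
have [_ _ represents] := hrep.
pose wrd_core s := wrd (core_emb n s).
have represents_core s s' : in_core n s -> in_core n s' ->
    core_lt s s' <-> next_lt ltJ O (len (core_emb n s)) (wrd_core s)
                                    (len (core_emb n s')) (wrd_core s').
  by move=> Vs Vs'; rewrite -(@tw_lt_core_emb n) //; apply: represents.
have core_inhabited : exists s, in_core n s by exists (ST 1) => /=; lia.
have [q0 [class_module letters_differ]] :=
  first_split_modules hJ represents_core (@core_partner n) core_inhabited.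
have letter_inj := prime_order_injective (@core_prime n) class_module letters_differ.
have -> : 3 * n.+4 - 8 = 3 * n + 4 by lia.
exists q0, (fun m : 'I_(3 * n + 4) => wrd_core (core_enum n m) q0).
move=> m m' /letter_inj eq_mm'; apply/val_inj/(@core_enum_inj n).
by apply: eq_mm'; apply: core_enum_in_core.
Qed.
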